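(* Let $f\colon\Sigma\to\mathbb{R}^3$ be a frontal and $p\in\Sigma$ a non-degenerate singular point. Let $\gamma=\gamma(t)$ be a singular curve with $\gamma(0)=p$, and let $\xi,\eta$ be smooth vector fields near $p$ such that along $\gamma$ one has $\xi=\gamma'$, $df(\eta)=0$ and $\det(\xi,\eta)>0$. Assume that (a) $\eta^3f(p)=\mathbf{0}$; (b) $\xi f(p)$ and $\eta^2f(p)$ are linearly independent; (c) $\xi\eta^3f(p)$ and $\eta^2f(p)$ are linearly dependent. Then there exist a regular curve $c\colon(-\varepsilon,\varepsilon)\to\Sigma$ and $\ell\in\mathbb{R}$ such that, writing $\hat c=f\circ c$: $c(0)=p$, $c'(0)$ is parallel to $\eta(p)$, $\hat c''(0)\neq\mathbf 0$, $\hat c'''(0)=\ell\,\hat c''(0)$, and \[ B:=\det\big(df(\gamma'(0)),\,\hat c''(0),\,3\hat c^{(5)}(0)-10\ell\,\hat c^{(4)}(0)\big)=3\det\big(\xi f,\eta^2f,\eta^5f\big)(p). \]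
   Context: A smooth map $f\colon U\to\mathbb{R}^3$ from a surface is a frontal if there is a smooth map $n\colon U\to S^2$ with $n$ orthogonal (for the Euclidean inner product) to $df(TU)$. A singular point is a point where $f$ is not an immersion. The signed area density is $\lambda=\det(f_u,f_v,n)$ in local coordinates $(u,v)$; a singular point $p$ is non-degenerate if $d\lambda_p\neq0$. Near a non-degenerate singular point the singular set is the image of a regular curve $\gamma$ (a singular curve). For a vector field $\eta$, $\eta^kf$ denotes the $k$-fold directional derivative $\eta\cdots\eta f$, and $\xi\eta^3f=\xi(\eta^3 f)$. *)

From HB Require Import structures.
From mathcomp Require Import all_boot all_order all_algebra.
From mathcomp Require Import all_classical all_reals all_analysis.
Set Implicit Arguments. Unset Strict Implicit. Unset Printing Implicit Defensive.
Import Order.TTheory GRing.Theory Num.Theory.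
Import numFieldNormedType.Exports.
Local Open Scope classical_set_scope.
Local Open Scope ring_scope.

Fixpoint Ck {R : realType} {V W : normedModType R} (k : nat)
  (U : set V) (F : V -> W) : Prop :=
  match k with
  | 0 => forall x, U x -> {for x, continuous F}
  | k'.+1 => (forall x, U x -> differentiable F x) /\
             (forall v : V, Ck k' U (fun x => derive F x v))
  end.

Definition smooth_on {R : realType} {V W : normedModType R}
  (U : set V) (F : V -> W) : Prop := forall k, Ck k U F.

Definition vfder {R : realType} {W : normedModType R}
  (X : 'rV[R]_2 -> 'rV[R]_2) (F : 'rV[R]_2 -> W) : 'rV[R]_2 -> W :=
  fun x => derive F x (X x).

Definition vfiter {R : realType} {W : normedModType R} (k : nat)
  (X : 'rV[R]_2 -> 'rV[R]_2) (F : 'rV[R]_2 -> W) : 'rV[R]_2 -> W :=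
  iter k (vfder X) F.

Definition e2 {R : realType} (i : 'I_2) : 'rV[R]_2 := delta_mx 0 i.
Definition pd {R : realType} {W : normedModType R} (i : 'I_2)
  (F : 'rV[R]_2 -> W) : 'rV[R]_2 -> W := fun x => derive F x (e2 i).

Definition dot3 {R : realType} (a b : 'rV[R]_3) : R := \sum_(i < 3) a 0 i * b 0 i.

Definition det3 {R : realType} (a b c : 'rV[R]_3) : R :=
  \det (\matrix_(i < 3, j < 3)
          (if i == 0 :> nat then a 0 j else if i == 1 :> nat then b 0 j else c 0 j)).
Definition det2 {R : realType} (a b : 'rV[R]_2) : R :=
  \det (\matrix_(i < 2, j < 2) (if i == 0 :> nat then a 0 j else b 0 j)).

Definition lin_indep2 {R : realType} (a b : 'rV[R]_3) : Prop :=
  forall s t : R, s *: a + t *: b = 0 -> s = 0 /\ t = 0.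

Definition frontal_with {R : realType} (U : set 'rV[R]_2)
  (f n : 'rV[R]_2 -> 'rV[R]_3) : Prop :=
  [/\ smooth_on U f, smooth_on U n,
      (forall x, U x -> dot3 (n x) (n x) = 1) &
      (forall x, U x -> dot3 (pd 0 f x) (n x) = 0 /\ dot3 (pd 1 f x) (n x) = 0)].

Definition immersion_at {R : realType} (f : 'rV[R]_2 -> 'rV[R]_3) (x : 'rV[R]_2) : Prop :=
  forall v : 'rV[R]_2, derive f x v = 0 -> v = 0.

Definition singular_point {R : realType} (f : 'rV[R]_2 -> 'rV[R]_3) (x : 'rV[R]_2) : Prop :=
  ~ immersion_at f x.

Definition lambda {R : realType} (f n : 'rV[R]_2 -> 'rV[R]_3) : 'rV[R]_2 -> R :=
  fun x => det3 (pd 0 f x) (pd 1 f x) (n x).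

Definition nondegenerate_singular_point {R : realType}
  (f n : 'rV[R]_2 -> 'rV[R]_3) (p : 'rV[R]_2) : Prop :=
  singular_point f p /\ (pd 0 (lambda f n) p <> 0 \/ pd 1 (lambda f n) p <> 0).

Definition sym_int {R : realType} (e : R) : set R := [set t | - e < t < e].

Definition regular_curve {R : realType} (e : R) (U : set 'rV[R]_2)
  (c : R -> 'rV[R]_2) : Prop :=
  [/\ 0 < e, smooth_on (sym_int e) c,
      (forall t, sym_int e t -> U (c t)) &
      (forall t, sym_int e t -> derive1 c t <> 0)].

From HB Require Import structures.
From mathcomp Require Import all_boot all_order all_algebra.
From mathcomp Require Import all_classical all_reals all_analysis.
Import Order.TTheory GRing.Theory Num.Theory.
Import numFieldNormedType.Exports.
Local Open Scope classical_set_scope.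
Local Open Scope ring_scope.

Set Implicit Arguments.
Unset Strict Implicit.

(* Along an integral curve c of eta through p one has (f o c)^(k)(0) = eta^k f(p).
   Hence (f o c)''(0) = eta^2 f(p) is nonzero by (b), (f o c)'''(0) = eta^3 f(p) = 0 by
   (a), so l = 0 works, and B = 3 det(xi f, eta^2 f, eta^5 f)(p) because xi(p) = gamma'(0).
   No exact integral curve is needed: it suffices that the velocity of c agree with
   eta o c to order 5 at 0, which a polynomial curve built by successive Taylor
   corrections achieves. *)

Section Differentiation.
Context {R : realType} {V W : normedModType R}.

Lemma near_eq_differentiable (F G : V -> W) x :
  (\near x, F x = G x) -> differentiable F x -> differentiable G x.
Proof.
move=> FG dF; have FGx : F x = G x := nbhs_singleton FG.
have [dFc dFo] := (diff_locallyP _ _).1 dF.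
have dGo : G \o shift x = cst (G x) + 'd F x +o_ 0 id.
  apply/eqaddoP => e e0; move/eqaddoP: dFo => /(_ e e0).
  have : \forall z \near 0, F (z + x) = G (z + x).
    by move: FG; rewrite (near_shift 0 x) /= subr0.
  apply: filter_app2; near=> z => /= FGz.
  suff -> : (G \o +%R^~ x - (cst (G x) + 'd F x)) z =
            (F \o +%R^~ x - (cst (F x) + 'd F x)) z by [].
  by rewrite !fctE /= FGz FGx.
have dG : 'd G x = 'd F x :> (V -> W) by apply: diff_unique.
by apply/diff_locallyP; rewrite dG.
Unshelve. all: by end_near. Qed.

Lemma derive_comp {V' : normedModType R} (c : V -> V') (g : V' -> W) x v :
  differentiable c x -> differentiable g (c x) ->
  derive (g \o c) x v = derive g (c x) (derive c x v).
Proof.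
move=> dc dg; rewrite deriveE; last exact: differentiable_comp.
by rewrite diff_comp // !deriveE.
Qed.

(* A copy of [*:%R] carrying the bilinear structure needed by [diff_bilin]. *)
Definition scalev (a : R) (w : W) : W := a *: w.

Lemma scalev_is_bilinear :
  bilinear_for
    (GRing.Scale.Law.clone _ _ *:%R _) (GRing.Scale.Law.clone _ _ *:%R _) scalev.
Proof.
split=> [u'|u] a x y /=; rewrite /scalev.
- by rewrite scalerDl scalerA.
- by rewrite scalerDr !scalerA mulrC.
Qed.

HB.instance Definition _ :=
  bilinear_isBilinear.Build R R W W _ _ scalev scalev_is_bilinear.

Lemma diff_scalef (phi : V -> R) (F : V -> W) x :
  differentiable phi x -> differentiable F x ->
  differentiable (fun y => phi y *: F y) x /\
  'd (fun y => phi y *: F y) x = (fun v => 'd phi x v *: F x + phi x *: 'd F x v) :> (V -> W).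
Proof.
move=> dphi dF.
have -> : (fun y => phi y *: F y) = (fun q => scalev q.1 q.2) \o (fun y => (phi y, F y)) by [].
have dpair := differentiable_pair dphi dF.
have scalev_cont : continuous (fun q : R * W => scalev q.1 q.2).
  by move=> q; exact: (@scale_continuous _ _ q).
have dscalev := differentiable_bilin (phi x, F x) scalev_cont.
split; first exact: differentiable_comp.
rewrite diff_comp // diff_bilin // diff_pair //.
by apply/funext => v /=; rewrite /scalev addrC.
Qed.

Lemma differentiable_scalef (phi : V -> R) (F : V -> W) x :
  differentiable phi x -> differentiable F x ->
  differentiable (fun y => phi y *: F y) x.
Proof. by move=> dphi dF; have [] := diff_scalef dphi dF. Qed.

Lemma derive_scalef (phi : V -> R) (F : V -> W) x v :
  differentiable phi x -> differentiable F x ->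
  derive (fun y => phi y *: F y) x v = derive phi x v *: F x + phi x *: derive F x v.
Proof.
move=> dphi dF; have [dpF dpFE] := diff_scalef dphi dF.
by rewrite deriveE // dpFE !deriveE.
Qed.

End Differentiation.

Section CkBasics.
Context {R : realType} {V W : normedModType R}.
Implicit Types (U : set V) (F G : V -> W).

Lemma Ck_subset k U U' F : U' `<=` U -> Ck k U F -> Ck k U' F.
Proof.
elim: k F => [|k IH] F sU /=; first by move=> cF x /sU; apply: cF.
by move=> [dF hF]; split=> [x /sU|v]; [apply: dF | apply: IH].
Qed.

Lemma eq_Ck k U F G : open U -> (forall x, U x -> F x = G x) ->
  Ck k U F -> Ck k U G.
Proof.
move=> oU; elim: k F G => [|k IH] F G FG /=.
- move=> cF x Ux.
  have nFG : \forall y \near x, F y = G y.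
    by near=> y; apply: FG; near: y; exact: open_nbhs_nbhs.
  rewrite /prop_for /continuous_at -(FG x Ux); apply: cvg_trans (cF x Ux).
  by apply: near_eq_cvg; near=> y; rewrite (near nFG y).
- move=> [dF hF]; split.
  + move=> x Ux; apply: near_eq_differentiable (dF x Ux).
    by near=> y; apply: FG; near: y; exact: open_nbhs_nbhs.
  + move=> v; apply: (IH (fun x => derive F x v)) (hF v) => x Ux.
    by apply: near_eq_derive; near=> y; apply: FG; near: y; exact: open_nbhs_nbhs.
Unshelve. all: by end_near. Qed.

Lemma Ck_continuous k U F x : Ck k U F -> U x -> {for x, continuous F}.
Proof.
case: k => [|k] /=; first by move=> cF; apply: cF.
by move=> [dF _] Ux; exact: differentiable_continuous (dF x Ux).
Qed.

Lemma CkW k U F : Ck k.+1 U F -> Ck k U F.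
Proof.
elim: k F => [|k IH] F [dF hF] /=.
  by move=> x Ux; exact: differentiable_continuous (dF x Ux).
by split=> // v; apply: IH; apply: hF.
Qed.

Lemma Ck_cst k U (a : W) : Ck k U (fun=> a).
Proof.
elim: k a => [|k IH] a /=; first by move=> x _; exact: cvg_cst.
split=> [x _|v]; first exact: differentiable_cst.
rewrite (_ : (fun x => derive (fun=> a) x v) = fun=> 0) //.
by apply/funext => x; exact: derive_cst.
Qed.

End CkBasics.

Section CkAlgebra.
Context {R : realType} {V W : normedModType R}.
Implicit Types (U : set V) (F G : V -> W).

Lemma CkD k U F G : open U -> Ck k U F -> Ck k U G -> Ck k U (fun x => F x + G x).
Proof.
move=> oU; elim: k F G => [|k IH] F G /=.
  by move=> cF cG x Ux; apply: cvgD; [apply: cF | apply: cG].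
move=> [dF hF] [dG hG]; split=> [x Ux|v]; first exact: differentiableD (dF x Ux) (dG x Ux).
apply: eq_Ck oU _ (IH _ _ (hF v) (hG v)) => x Ux /=.
by rewrite deriveD //; apply: diff_derivable; [exact: dF | exact: dG].
Qed.

Lemma CkZ k U (phi : V -> R) F : open U ->
  Ck k U phi -> Ck k U F -> Ck k U (fun x => phi x *: F x).
Proof.
move=> oU; elim: k phi F => [|k IH] phi F.
  by move=> cphi cF x Ux; exact: continuousZ (cphi x Ux) (cF x Ux).
move=> Cphi CF; have [Cphi' CF'] := (CkW Cphi, CkW CF).
case: Cphi => dphi hphi; case: CF => dF hF; split=> [x Ux|v].
  exact: differentiable_scalef (dphi x Ux) (dF x Ux).
apply: eq_Ck oU _ (CkD oU (IH _ _ (hphi v) CF') (IH _ _ Cphi' (hF v))) => x Ux.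
by rewrite derive_scalef //; [apply: dphi | apply: dF].
Qed.

Lemma CkB k U F G : open U -> Ck k U F -> Ck k U G -> Ck k U (fun x => F x - G x).
Proof.
move=> oU CF CG; apply: eq_Ck oU _ (CkD oU CF (CkZ oU (Ck_cst k U (-1 : R)) CG)).
by move=> x _; rewrite scaleN1r.
Qed.

Lemma Ck_coord k U m n (F : V -> 'M[R]_(m, n)) i j :
  open U -> Ck k U F -> Ck k U (fun x => F x i j).
Proof.
move=> oU; elim: k F => [|k IH] F /=.
  move=> cF x Ux; have dcoord := differentiable_coord (F x) i j.
  exact: continuous_comp (cF x Ux) (differentiable_continuous dcoord).
move=> [dF hF]; split=> [x Ux|v].
  exact: differentiable_comp (dF x Ux) (differentiable_coord (F x) i j).
apply: eq_Ck oU _ (IH _ (hF v)) => x Ux /=.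
by rewrite derive_mx ?mxE //; apply: diff_derivable; apply: dF.
Qed.

End CkAlgebra.

Section Smooth.
Context {R : realType} {V W : normedModType R}.
Implicit Types (U : set V) (F G : V -> W).

Lemma smooth_subset U U' F : U' `<=` U -> smooth_on U F -> smooth_on U' F.
Proof. by move=> sU sF k; exact: Ck_subset sU (sF k). Qed.

Lemma eq_smooth U F G : open U -> (forall x, U x -> F x = G x) ->
  smooth_on U F -> smooth_on U G.
Proof. by move=> oU FG sF k; exact: eq_Ck oU FG (sF k). Qed.

Lemma smooth_continuous U F x : smooth_on U F -> U x -> {for x, continuous F}.
Proof. by move=> sF; exact: Ck_continuous (sF 0%N). Qed.

Lemma smooth_differentiable U F x : smooth_on U F -> U x -> differentiable F x.
Proof. by move=> sF; case: (sF 1%N) => dF _; exact: dF. Qed.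

Lemma smooth_derive U F v : smooth_on U F -> smooth_on U (fun x => derive F x v).
Proof. by move=> sF k; case: (sF k.+1) => _; apply. Qed.

Lemma smooth_cst U (a : W) : smooth_on U (fun=> a).
Proof. by move=> k; exact: Ck_cst. Qed.

Lemma smoothD U F G : open U -> smooth_on U F -> smooth_on U G ->
  smooth_on U (fun x => F x + G x).
Proof. by move=> oU sF sG k; exact: CkD. Qed.

Lemma smoothB U F G : open U -> smooth_on U F -> smooth_on U G ->
  smooth_on U (fun x => F x - G x).
Proof. by move=> oU sF sG k; exact: CkB. Qed.

Lemma smoothZ U (phi : V -> R) F : open U -> smooth_on U phi -> smooth_on U F ->
  smooth_on U (fun x => phi x *: F x).
Proof. by move=> oU sphi sF k; exact: CkZ. Qed.

Lemma smooth_coord U m n (F : V -> 'M[R]_(m, n)) i j :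
  open U -> smooth_on U F -> smooth_on U (fun x => F x i j).
Proof. by move=> oU sF k; exact: Ck_coord. Qed.

Lemma smooth_open_preimage (c : V -> W) (A : set W) :
  smooth_on setT c -> open A -> open (c @^-1` A).
Proof. by move=> sc oA; apply: open_comp => // x _; exact: smooth_continuous sc I. Qed.

End Smooth.

Section PlaneDomain.
Context {R : realType} {W : normedModType R}.

Lemma rV2E (w : 'rV[R]_2) : w = w 0 0 *: e2 0 + w 0 1 *: e2 1.
Proof.
rewrite {1}[w]row_sum_delta big_ord_recr big_ord1 /e2.
by congr (w 0 _ *: delta_mx 0 _ + w 0 _ *: delta_mx 0 _); apply: val_inj.
Qed.

Lemma derive_rV2 (g : 'rV[R]_2 -> W) x v : differentiable g x ->
  derive g x v = v 0 0 *: pd 0 g x + v 0 1 *: pd 1 g x.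
Proof. by move=> dg; rewrite /pd !deriveE // {1}(rV2E v) linearD !linearZ. Qed.

Lemma smooth_pd (W0 : set 'rV[R]_2) (g : 'rV[R]_2 -> W) i :
  smooth_on W0 g -> smooth_on W0 (pd i g).
Proof. exact: smooth_derive. Qed.

Lemma Ck_comp {V : normedModType R} k (U : set V) (W0 : set 'rV[R]_2)
    (c : V -> 'rV[R]_2) (g : 'rV[R]_2 -> W) :
  open U -> open W0 -> (forall x, U x -> W0 (c x)) ->
  Ck k U c -> smooth_on W0 g -> Ck k U (g \o c).
Proof.
move=> oU oW0 cW; elim: k g => [|k IH] g.
  by move=> cc sg x Ux; exact: continuous_comp (cc x Ux) (smooth_continuous sg (cW x Ux)).
move=> Cc sg; have Cc' := CkW Cc; case: Cc => dc hc.
have dgc x : U x -> differentiable g (c x).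
  by move=> Ux; exact: smooth_differentiable sg (cW x Ux).
split=> [x Ux|v]; first exact: differentiable_comp (dc x Ux) (dgc x Ux).
apply: eq_Ck oU _ (CkD oU
   (CkZ oU (Ck_coord 0 0 oU (hc v)) (IH _ Cc' (smooth_pd 0 sg)))
   (CkZ oU (Ck_coord 0 1 oU (hc v)) (IH _ Cc' (smooth_pd 1 sg)))) => x Ux.
rewrite [RHS]derive_comp; [|exact: dc|exact: dgc].
by rewrite (derive_rV2 (g := g)) //; exact: dgc.
Qed.

Lemma smooth_comp {V : normedModType R} (U : set V) (W0 : set 'rV[R]_2)
    (c : V -> 'rV[R]_2) (g : 'rV[R]_2 -> W) :
  open U -> open W0 -> (forall x, U x -> W0 (c x)) ->
  smooth_on U c -> smooth_on W0 g -> smooth_on U (g \o c).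
Proof. by move=> oU oW0 cW sc sg k; exact: Ck_comp oU oW0 cW (sc k) sg. Qed.

Lemma smooth_vfder (W0 : set 'rV[R]_2) (X : 'rV[R]_2 -> 'rV[R]_2) (g : 'rV[R]_2 -> W) :
  open W0 -> smooth_on W0 X -> smooth_on W0 g -> smooth_on W0 (vfder X g).
Proof.
move=> oW0 sX sg; apply: eq_smooth oW0 _ (smoothD oW0
   (smoothZ oW0 (smooth_coord 0 0 oW0 sX) (smooth_pd 0 sg))
   (smoothZ oW0 (smooth_coord 0 1 oW0 sX) (smooth_pd 1 sg))) => x Wx.
by rewrite /vfder derive_rV2 //; exact: smooth_differentiable sg Wx.
Qed.

End PlaneDomain.

Section Curves.
Context {R : realType} {W : normedModType R}.
Implicit Types (I : set R) (h a b : R -> W).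

Lemma smooth_derive1 I h : smooth_on I h -> smooth_on I (derive1 h).
Proof.
move=> sh; rewrite (_ : derive1 h = fun t => derive h t 1); first exact: smooth_derive.
by apply/funext => t; rewrite derive1E.
Qed.

Lemma smooth_derive1n I h j : smooth_on I h -> smooth_on I (derive1n j h).
Proof. by move=> sh; elim: j => [|j IH] //; rewrite derive1nS; exact: smooth_derive1. Qed.

Lemma smooth_derivable I h t : smooth_on I h -> I t -> derivable h t 1.
Proof. by move=> sh It; exact/diff_derivable/(smooth_differentiable sh It). Qed.

Lemma derive1B a b t : differentiable a t -> differentiable b t ->
  derive1 (fun s => a s - b s) t = derive1 a t - derive1 b t.
Proof.
by move=> da db; rewrite !derive1E (deriveB (f := a) (g := b)) //; exact: diff_derivable.
Qed.

Lemma eq_derive1n I h1 h2 : open I -> (forall t, I t -> h1 t = h2 t) ->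
  forall j t, I t -> derive1n j h1 t = derive1n j h2 t.
Proof.
move=> oI h12; elim=> [|j IH] t It; first exact: h12.
rewrite !derive1nS !derive1E; apply: near_eq_derive.
by near=> s; apply: IH; near: s; exact: open_nbhs_nbhs.
Unshelve. all: by end_near. Qed.

Lemma derive1nD I a b : open I -> smooth_on I a -> smooth_on I b ->
  forall j t, I t -> derive1n j (fun s => a s + b s) t = derive1n j a t + derive1n j b t.
Proof.
move=> oI sa sb; elim=> [|j IH] t It //.
rewrite !derive1nS !derive1E.
rewrite (@near_eq_derive _ _ _ _ (fun s => derive1n j a s + derive1n j b s)); last first.
  by near=> s; apply: IH; near: s; exact: open_nbhs_nbhs.
by rewrite deriveD //; apply: smooth_derivable It; exact: smooth_derive1n.
Unshelve. all: by end_near. Qed.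

Lemma derive1nB I a b : open I -> smooth_on I a -> smooth_on I b ->
  forall j t, I t -> derive1n j (fun s => a s - b s) t = derive1n j a t - derive1n j b t.
Proof.
move=> oI sa sb; elim=> [|j IH] t It //.
rewrite !derive1nS !derive1E.
rewrite (@near_eq_derive _ _ _ _ (fun s => derive1n j a s - derive1n j b s)); last first.
  by near=> s; apply: IH; near: s; exact: open_nbhs_nbhs.
by rewrite deriveB //; apply: smooth_derivable It; exact: smooth_derive1n.
Unshelve. all: by end_near. Qed.

Definition flat0 m h := forall j, (j < m)%N -> derive1n j h 0 = 0.

Lemma flat0S m h : flat0 m.+1 h <-> h 0 = 0 /\ flat0 m (derive1 h).
Proof.
split=> [h0|[h0 h'0] [|j] jm //]; last by rewrite derive1Sn; exact: h'0.
by split=> [|j jm]; [exact: (h0 0%N) | rewrite -derive1Sn; exact: h0].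
Qed.

Lemma flat0W m h : flat0 m.+1 h -> flat0 m h.
Proof. by move=> h0 j jm; apply: h0; rewrite ltnS ltnW. Qed.

Lemma eq_flat0 I m h1 h2 : open I -> I 0 -> (forall t, I t -> h1 t = h2 t) ->
  flat0 m h1 -> flat0 m h2.
Proof. by move=> oI I0 h12 h10 j jm; rewrite -(eq_derive1n oI h12) //; exact: h10. Qed.

Lemma flat0D I m a b : open I -> I 0 -> smooth_on I a -> smooth_on I b ->
  flat0 m a -> flat0 m b -> flat0 m (fun t => a t + b t).
Proof. by move=> oI I0 sa sb a0 b0 j jm; rewrite (derive1nD oI sa sb) // a0 // b0 // addr0. Qed.

End Curves.

Section FlatProducts.
Context {R : realType} {W : normedModType R}.

Lemma derive1_scalef (phi : R -> R) (F : R -> W) t :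
  differentiable phi t -> differentiable F t ->
  derive1 (fun s => phi s *: F s) t = derive1 phi t *: F t + phi t *: derive1 F t.
Proof. by move=> dphi dF; rewrite !derive1E derive_scalef. Qed.

Lemma flat0Z (I : set R) m (phi : R -> R) (F : R -> W) : open I -> I 0 ->
  smooth_on I phi -> smooth_on I F -> flat0 m phi \/ flat0 m F ->
  flat0 m (fun t => phi t *: F t).
Proof.
move=> oI I0; elim: m phi F => [|m IH] phi F sphi sF flat_phiF; first by [].
have [sphi' sF'] := (smooth_derive1 sphi, smooth_derive1 sF).
apply/flat0S; split.
  by case: flat_phiF => /flat0S [-> _]; rewrite ?scale0r ?scaler0.
apply: (eq_flat0 oI I0 (h1 := fun t => derive1 phi t *: F t + phi t *: derive1 F t)).
  move=> t It; rewrite derive1_scalef //.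
    exact: smooth_differentiable sphi It.
  exact: smooth_differentiable sF It.
apply: flat0D oI I0 (smoothZ oI sphi' sF) (smoothZ oI sphi sF') _ _.
all: by case: flat_phiF => /[dup] /flat0S [_ ?] /flat0W ?; apply: IH; auto.
Qed.

Lemma derive1n_coord (I : set R) n (h : R -> 'rV[R]_n) i : open I -> smooth_on I h ->
  forall j t, I t -> derive1n j (fun s => h s 0 i) t = derive1n j h t 0 i.
Proof.
move=> oI sh; elim=> [|j IH] t It //.
rewrite !derive1nS !derive1E.
rewrite (@near_eq_derive _ _ _ _ (fun s => derive1n j h s 0 i)); last first.
  by near=> s; apply: IH; near: s; exact: open_nbhs_nbhs.
by rewrite derive_mx ?mxE //; apply: smooth_derivable It; exact: smooth_derive1n.
Unshelve. all: by end_near. Qed.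

Lemma flat0_coord (I : set R) m n (h : R -> 'rV[R]_n) i : open I -> I 0 ->
  smooth_on I h -> flat0 m h -> flat0 m (fun t => h t 0 i).
Proof. by move=> oI I0 sh h0 j jm; rewrite (derive1n_coord i oI sh) // h0 // mxE. Qed.

End FlatProducts.

Section CurvesInPlaneDomain.
Context {R : realType} {Y : normedModType R}.
Variables (W0 : set 'rV[R]_2) (I : set R).
Hypotheses (oW0 : open W0) (oI : open I) (I0 : I 0).
Implicit Types (c r : R -> 'rV[R]_2) (g : 'rV[R]_2 -> Y).

Let derive_rV2_comp g c r t : smooth_on W0 g -> {homo c : s / I s >-> W0 s} -> I t ->
  r t 0 0 *: pd 0 g (c t) + r t 0 1 *: pd 1 g (c t) = derive g (c t) (r t).
Proof. by move=> sg cW It; rewrite derive_rV2 //; exact: smooth_differentiable sg (cW t It). Qed.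

Lemma smooth_derive_comp g c r : smooth_on W0 g -> smooth_on I c ->
  {homo c : t / I t >-> W0 t} -> smooth_on I r ->
  smooth_on I (fun t => derive g (c t) (r t)).
Proof.
move=> sg sc cW sr; apply: eq_smooth oI (fun t => derive_rV2_comp r sg cW) _.
have sterm i : smooth_on I (fun t => r t 0 i *: (pd i g \o c) t).
  exact: smoothZ oI (smooth_coord 0 i oI sr) (smooth_comp oI oW0 cW sc (smooth_pd i sg)).
exact: smoothD oI (sterm 0) (sterm 1).
Qed.

Lemma flat0_derive_comp m g c r : smooth_on W0 g -> smooth_on I c ->
  {homo c : t / I t >-> W0 t} -> smooth_on I r -> flat0 m r ->
  flat0 m (fun t => derive g (c t) (r t)).
Proof.
move=> sg sc cW sr r0; apply: eq_flat0 oI I0 (fun t => derive_rV2_comp r sg cW) _.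
have spgc i : smooth_on I (pd i g \o c) := smooth_comp oI oW0 cW sc (smooth_pd i sg).
have sterm i : smooth_on I (fun t => r t 0 i *: (pd i g \o c) t).
  exact: smoothZ oI (smooth_coord 0 i oI sr) (spgc i).
have flat_term i : flat0 m (fun t => r t 0 i *: (pd i g \o c) t).
  exact: flat0Z oI I0 (smooth_coord 0 i oI sr) (spgc i) (or_introl (flat0_coord i oI I0 sr r0)).
exact: flat0D oI I0 (sterm 0) (sterm 1) (flat_term 0) (flat_term 1).
Qed.

Lemma flat0_compB n c1 c2 : smooth_on I c1 -> smooth_on I c2 ->
  {homo c1 : t / I t >-> W0 t} -> {homo c2 : t / I t >-> W0 t} ->
  flat0 n (fun t => c2 t - c1 t) ->
  forall g, smooth_on W0 g -> flat0 n (fun t => g (c2 t) - g (c1 t)).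
Proof.
move=> s1 s2 cW1 cW2; elim: n => [|n IH] c12 g sg; first by [].
have [/subr0_eq c12_0 c12'] := proj1 (flat0S _ _) c12.
apply/flat0S; split; first by rewrite c12_0 subrr.
have sd' := smooth_derive1 (smoothB oI s2 s1).
have sc1' i := smooth_coord 0 i oI (smooth_derive1 s1).
have spg12 i : smooth_on I (fun t => pd i g (c2 t) - pd i g (c1 t)).
  exact: smoothB oI (smooth_comp oI oW0 cW2 s2 (smooth_pd i sg))
                    (smooth_comp oI oW0 cW1 s1 (smooth_pd i sg)).
pose e i t := derive1 c1 t 0 i *: (pd i g (c2 t) - pd i g (c1 t)).
have se i : smooth_on I (e i) := smoothZ oI (sc1' i) (spg12 i).
have flat_e i : flat0 n (e i).
  apply: flat0Z oI I0 (sc1' i) (spg12 i) _.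
  by right; exact: IH (flat0W c12) _ (smooth_pd i sg).
apply: (eq_flat0 oI I0 (h1 := fun t =>
  derive g (c2 t) (derive1 (fun s => c2 s - c1 s) t) + (e 0 t + e 1 t))).
  move=> t It; have [dc1 dc2] := (smooth_differentiable s1 It, smooth_differentiable s2 It).
  have [dg1 dg2] := (smooth_differentiable sg (cW1 t It), smooth_differentiable sg (cW2 t It)).
  have dgc1 : differentiable (g \o c1) t := differentiable_comp dc1 dg1.
  have dgc2 : differentiable (g \o c2) t := differentiable_comp dc2 dg2.
  rewrite [RHS](derive1B dgc2 dgc1) derive1B // !derive1E.
  rewrite (derive_comp _ dc1 dg1) (derive_comp _ dc2 dg2) /e !derive1E.
  rewrite !scalerBr addrACA -opprD -(derive_rV2 _ dg1) -(derive_rV2 _ dg2).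
  by rewrite !(deriveE _ dg2) linearB addrA subrK.
apply: flat0D oI I0 _ (smoothD oI (se 0) (se 1)) _
  (flat0D oI I0 (se 0) (se 1) (flat_e 0) (flat_e 1)).
  exact: smooth_derive_comp sg s2 cW2 sd'.
exact: flat0_derive_comp sg s2 cW2 sd' c12'.
Qed.

Lemma derive1n_comp_vfiter m (X : 'rV[R]_2 -> 'rV[R]_2) c :
  smooth_on W0 X -> smooth_on I c -> {homo c : t / I t >-> W0 t} ->
  flat0 m (fun t => derive1 c t - X (c t)) ->
  forall k g, (k <= m)%N -> smooth_on W0 g -> derive1n k (g \o c) 0 = vfiter k X g (c 0).
Proof.
move=> sX sc cW flat_r; elim=> [//|k IH] g km sg.
pose r t := derive1 c t - X (c t).
have sr : smooth_on I r := smoothB oI (smooth_derive1 sc) (smooth_comp oI oW0 cW sc sX).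
have dgc t : I t -> derive1 (g \o c) t = vfder X g (c t) + derive g (c t) (r t).
  move=> It; have dg := smooth_differentiable sg (cW t It).
  rewrite derive1E derive_comp -?derive1E //; last exact: smooth_differentiable sc It.
  by rewrite /vfder !(deriveE _ dg) -linearD addrCA subrr addr0.
have sXgc : smooth_on I (vfder X g \o c) := smooth_comp oI oW0 cW sc (smooth_vfder oW0 sX sg).
rewrite derive1Sn (eq_derive1n oI dgc k I0).
rewrite (derive1nD oI sXgc (smooth_derive_comp sg sc cW sr)) //.
rewrite (flat0_derive_comp sg sc cW sr flat_r) // addr0 /vfiter iterSr.
exact: IH (ltnW km) (smooth_vfder oW0 sX sg).
Qed.

End CurvesInPlaneDomain.

Section TaylorTerm.
Context {R : realType} {W : normedModType R}.

Definition pow_fact (m : nat) (t : R) : R := t ^+ m / m`!%:R.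

Definition taylor_term (m : nat) (d : W) (t : R) : W := pow_fact m t *: d.

Lemma smooth_exprn m : smooth_on setT (fun t : R => t ^+ m).
Proof.
have sid : smooth_on setT (fun t : R => t).
  case=> [|k] /=; first by move=> x _; exact: cvg_id.
  split=> [x _|v]; first exact/derivable1_diffP/derivable_id.
  rewrite (_ : (fun x => derive id x v) = fun=> v); first exact: Ck_cst.
  by apply/funext => x; exact: derive_id.
elim: m => [|m IH].
  by apply: eq_smooth openT _ (smooth_cst setT (1 : R)) => t _; rewrite expr0.
by apply: eq_smooth openT _ (smoothZ openT sid IH) => t _; rewrite exprS.
Qed.

Lemma smooth_taylor_term m d : smooth_on setT (taylor_term m d).
Proof.
exact: smoothZ openT (smoothZ openT (smooth_exprn m) (smooth_cst setT _)) (smooth_cst setT d).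
Qed.

Lemma derive1_pow_fact m : derive1 (pow_fact m.+1) = pow_fact m.
Proof.
apply/funext => t; rewrite /pow_fact derive1Mr; last exact: exprn_derivable.
rewrite exp_derive1 /= factS natrM invfM.
by rewrite [_ *: _]/(GRing.scale _ _) /= mulrACA mulfV ?mul1r // pnatr_eq0.
Qed.

Lemma derive1_taylor_term m d : derive1 (taylor_term m.+1 d) = taylor_term m d.
Proof.
apply/funext => t; rewrite /taylor_term derive1_scalef.
- by rewrite derive1_cst scaler0 addr0 derive1_pow_fact.
- exact: smooth_differentiable (smoothZ openT (smooth_exprn _) (smooth_cst setT _)) _.
- exact: differentiable_cst.
Qed.

Lemma derive1n_taylor_term m d j : (j <= m)%N ->
  derive1n j (taylor_term m d) = taylor_term (m - j) d.
Proof.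
elim: j => [|j IH] jm; first by rewrite subn0.
by rewrite derive1nS IH ?(ltnW jm) // -(subnSK jm) derive1_taylor_term.
Qed.

Lemma derive1n_taylor_term0 m d j : (j <= m)%N ->
  derive1n j (taylor_term m d) 0 = (j == m)%:R *: d.
Proof.
move=> jm; rewrite derive1n_taylor_term // /taylor_term /pow_fact.
have [->|ltjm] := eqVneq j m; first by rewrite subnn expr0 fact0 divr1.
by rewrite expr0n subn_eq0 leqNgt ltn_neqAle ltjm jm /= mul0r.
Qed.

Lemma flat0_taylor_term m d : flat0 m (taylor_term m d).
Proof. by move=> j jm; rewrite derive1n_taylor_term0 ?(ltnW jm) // ltn_eqF // scale0r. Qed.

End TaylorTerm.

Section ApproximateIntegralCurve.
Context {R : realType}.
Variables (W0 : set 'rV[R]_2) (X : 'rV[R]_2 -> 'rV[R]_2).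
Hypotheses (oW0 : open W0) (sX : smooth_on W0 X).

(* The witness subtracts from [c] the Taylor term of order [m.+1] whose coefficient is
   the [m]-th derivative at [0] of the velocity defect [c' - X o c]. *)
Lemma approx_integral_curve_step m c :
  smooth_on setT c -> W0 (c 0) -> flat0 m (fun t => derive1 c t - X (c t)) ->
  exists c1, [/\ smooth_on setT c1, c1 0 = c 0 &
                 flat0 m.+1 (fun t => derive1 c1 t - X (c1 t))].
Proof.
move=> sc Wc0 flat_r; pose r t := derive1 c t - X (c t); pose d := derive1n m r 0.
pose c1 t := c t - taylor_term m.+1 d t.
have sq := smooth_taylor_term m.+1 d.
have sc1 : smooth_on setT c1 := smoothB openT sc sq.
have dc1 t : derive1 c1 t = derive1 c t - taylor_term m d t.
  rewrite derive1B ?derive1_taylor_term //.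
    exact: smooth_differentiable sc I.
  exact: smooth_differentiable sq I.
have c10 : c1 0 = c 0 by rewrite /c1 /taylor_term /pow_fact expr0n mul0r scale0r subr0.
exists c1; split => //.
pose I := c @^-1` W0 `&` c1 @^-1` W0.
have oI : open I by apply: openI; apply: smooth_open_preimage.
have I0 : I 0 by split; rewrite /= ?c10.
have [cW c1W] : {homo c : t / I t >-> W0 t} /\ {homo c1 : t / I t >-> W0 t}.
  by split=> t [].
have [scI sc1I] := (smooth_subset (subsetT I) sc, smooth_subset (subsetT I) sc1).
have stI := smooth_subset (subsetT I) (smooth_taylor_term m d).
have srI : smooth_on I r := smoothB oI (smooth_derive1 scI) (smooth_comp oI oW0 cW scI sX).
have sXc := smooth_comp oI oW0 cW scI sX.
have sXc1 := smooth_comp oI oW0 c1W sc1I sX.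
have key t : I t -> (r t - taylor_term m d t) + (X (c t) - X (c1 t)) =
                    derive1 c1 t - X (c1 t).
  by move=> _; rewrite dc1 /r -!addrA; congr (_ + _); rewrite addrCA addKr.
have flat_rt : flat0 m.+1 (fun t => r t - taylor_term m d t).
  move=> j; rewrite ltnS => jm; rewrite (derive1nB oI srI stI) // derive1n_taylor_term0 //.
  have [->|ne] := eqVneq j m; first by rewrite scale1r subrr.
  by rewrite flat_r ?ltn_neqAle ?ne // scale0r subr0.
have flat_cc1 : flat0 m.+1 (fun t => c t - c1 t).
  apply: eq_flat0 oI I0 _ (flat0_taylor_term (m := m.+1) d) => t _.
  by rewrite /c1 opprB addrC subrK.
have flat_Xcc1 := flat0_compB oW0 oI I0 sc1I scI c1W cW flat_cc1 sX.
exact: eq_flat0 oI I0 key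
  (flat0D oI I0 (smoothB oI srI stI) (smoothB oI sXc sXc1) flat_rt flat_Xcc1).
Qed.

Lemma approx_integral_curve p : W0 p -> forall m, exists c,
  [/\ smooth_on setT c, c 0 = p & flat0 m (fun t => derive1 c t - X (c t))].
Proof.
move=> Wp; elim=> [|m [c [sc c0 flat_c]]].
  by exists (fun=> p); split=> //; exact: smooth_cst.
have Wc0 : W0 (c 0) by rewrite c0.
have [c1 [sc1 c10 flat_c1]] := approx_integral_curve_step sc Wc0 flat_c.
by exists c1; rewrite c10.
Qed.

End ApproximateIntegralCurve.

Lemma regular_curve_near0 {R : realType} (U : set 'rV[R]_2) (c : R -> 'rV[R]_2) :
  open U -> U (c 0) -> smooth_on setT c -> derive1 c 0 != 0 ->
  exists e, regular_curve e U c.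
Proof.
move=> oU Uc0 sc dc0.
have near0 : \forall t \near 0, U (c t) /\ derive1 c t != 0.
  have dc_cont := smooth_continuous (smooth_derive1 sc) (I : setT 0).
  move/cvgr_dist_lt: dc_cont => /(_ `|derive1 c 0|); rewrite normr_gt0 => /(_ dc0) dc_near.
  near=> t; split.
    by near: t; exact: (smooth_continuous sc I) _ (open_nbhs_nbhs (conj oU Uc0)).
  apply/eqP => dct0; have : `|derive1 c 0 - derive1 c t| < `|derive1 c 0|.
    by near: t; exact: dc_near.
  by rewrite dct0 subr0 ltxx.
have [e e_gt0 ce] : exists2 e : R, 0 < e &
    forall t, sym_int e t -> U (c t) /\ derive1 c t != 0.
  move/nbhs_ballP: near0 => [e e_gt0 ce]; exists e => // t et; apply: ce.
  by rewrite -ball_normE /= sub0r normrN ltr_norml.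
exists e; split=> //; first exact: smooth_subset (subsetT _) sc.
  by move=> t /ce [].
by move=> t /ce [_ /eqP].
Unshelve. all: by end_near. Qed.

Lemma det3Z {R : realType} (a b v : 'rV[R]_3) k : det3 a b (k *: v) = k * det3 a b v.
Proof.
rewrite /det3 (expand_det_row _ 2) [in RHS](expand_det_row _ 2) mulr_sumr.
apply: eq_bigr => j _; rewrite !mxE /= -mulrA; congr (_ * (_ * _)).
rewrite /cofactor; congr (_ * _); congr (\det _); apply/matrixP => i i'; rewrite !mxE.
by case: i => [[|[|i]]] Hi.
Qed.

Lemma det2r0 {R : realType} (a : 'rV[R]_2) : det2 a 0 = 0.
Proof. by rewrite /det2 (expand_det_row _ 1) big1 // => j _; rewrite !mxE /= mul0r. Qed.

Lemma lin_indep2_neq0r {R : realType} (a b : 'rV[R]_3) : lin_indep2 a b -> b != 0.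
Proof.
move=> ab; apply/eqP => b0.
have [_ /eqP] : (0 : R) = 0 /\ (1 : R) = 0.
  by apply: ab; rewrite b0 scale0r scaler0 addr0.
by rewrite oner_eq0.
Qed.

Theorem lemma3p5 (R : realType) (U : set 'rV[R]_2) (f n : 'rV[R]_2 -> 'rV[R]_3)
  (p : 'rV[R]_2) (delta : R) (gamma : R -> 'rV[R]_2)
  (W : set 'rV[R]_2) (xi eta : 'rV[R]_2 -> 'rV[R]_2) :
  open U -> U p ->
  frontal_with U f n ->
  nondegenerate_singular_point f n p ->
  (* singular curve through p *)
  regular_curve delta U gamma -> gamma 0 = p ->
  (forall t, sym_int delta t -> singular_point f (gamma t)) ->
  (* smooth vector fields near p *)
  open W -> W p -> W `<=` U -> smooth_on W xi -> smooth_on W eta ->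
  (forall t, sym_int delta t -> W (gamma t)) ->
  (* conditions along gamma *)
  (forall t, sym_int delta t -> xi (gamma t) = derive1 gamma t) ->
  (forall t, sym_int delta t -> derive f (gamma t) (eta (gamma t)) = 0) ->
  (forall t, sym_int delta t -> 0 < det2 (xi (gamma t)) (eta (gamma t))) ->
  (* (a) *) vfiter 3 eta f p = 0 ->
  (* (b) *) lin_indep2 (vfder xi f p) (vfiter 2 eta f p) ->
  (* (c) *) ~ lin_indep2 (vfder xi (vfiter 3 eta f) p) (vfiter 2 eta f p) ->
  exists (eps : R) (c : R -> 'rV[R]_2) (l : R),
    [/\ regular_curve eps U c, c 0 = p,
        (exists k : R, derive1 c 0 = k *: eta p),
        derive1n 2 (f \o c) 0 <> 0 /\
        derive1n 3 (f \o c) 0 = l *: derive1n 2 (f \o c) 0 &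
        det3 (derive f p (derive1 gamma 0)) (derive1n 2 (f \o c) 0)
             (3 *: derive1n 5 (f \o c) 0 - (10 * l) *: derive1n 4 (f \o c) 0)
        = 3 * det3 (vfder xi f p) (vfiter 2 eta f p) (vfiter 5 eta f p)].
Proof.
move=> oU Up [sf _ _ _] _ [delta_gt0 _ _ _] gamma0 _ oW Wp WU _ seta _ xi_gamma _
  det_pos eta3 indep _.
have [c [sc c0 flat_c]] := approx_integral_curve oW seta Wp 5.
have derive_fc k : (k <= 5)%N -> derive1n k (f \o c) 0 = vfiter k eta f p.
  move=> k5; rewrite -c0.
  apply: (derive1n_comp_vfiter (I := c @^-1` W) oW _ _ seta _ _ flat_c) => //.
  - exact: smooth_open_preimage.
  - by rewrite /= c0.
  - exact: smooth_subset (subsetT _) sc.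
  - exact: smooth_subset WU sf.
have dc0 : derive1 c 0 = eta p by have := flat_c 0%N isT; rewrite /= c0 => /subr0_eq.
have d0 : sym_int delta 0 by rewrite /sym_int /= oppr_lt0 delta_gt0.
have eta_p : eta p != 0.
  by apply/eqP => eta0; have := det_pos 0 d0; rewrite gamma0 eta0 det2r0 ltxx.
have [e ce] : exists e, regular_curve e U c.
  by apply: regular_curve_near0 oU _ sc _; rewrite ?c0 ?dc0.
exists e, c, 0; split=> //.
- by exists 1; rewrite scale1r.
- rewrite !derive_fc // eta3 scale0r; split=> //.
  exact/eqP/(lin_indep2_neq0r indep).
- by rewrite !derive_fc // mulr0 scale0r subr0 det3Z -(xi_gamma 0 d0) gamma0.
Qed.
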